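(* Let $G=(V,E)$ be a finite, simple, connected $K_w$-minor-free graph and $U\subseteq V$ with $|U|\ge\max(w,4)$. Let $a\in U$ be a $U$-good node with witnessing set $U_a$ and write $\epsilon=\epsilon_U$. Then for every $b\in U_a$ there exist at least $\lceil\epsilon(|U|-2)\rceil$ nodes $c\in U$ such that, for each of them, for at least $\lceil\epsilon(|U|-3)\rceil$ nodes $d\in U$ the set $\{(a,b),(c,d)\}$ is a good quadruple.
   Context: The interval $I(u,v)$ is the set of nodes on at least one shortest $u$–$v$ path in $G$. A quadruple in $U$ is a set $\{(a,b),(c,d)\}$ of two unordered pairs with $a,b,c,d\in U$ distinct; it is good if $I(a,b)\cap I(c,d)\ne\emptyset$. Let $q(U)$ and $q_{\mathrm{good}}(U)$ be the numbers of quadruples and good quadruples in $U$, and $\epsilon_U=q_{\mathrm{good}}(U)/(8q(U))$. A node $a\in U$ is $U$-good if there is a subset $U_a\subseteq U$ (a witnessing set) of size at least $\lceil 4\epsilon_U(|U|-1)\rceil$ such that for every $b\in U_a$ the number of pairs $c,d\in U$ for which $\{(a,b),(c,d)\}$ is a good quadruple is at least $\lceil 4\epsilon_U\binom{|U|-2}{2}\rceil$. *)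

From HB Require Import structures.
From mathcomp Require Import all_boot all_order all_algebra.
From mathcomp Require Import boolp.
Set Implicit Arguments.
Unset Strict Implicit.
Unset Printing Implicit Defensive.
Import Order.TTheory GRing.Theory Num.Theory.

Section Graphs.
Variable T : finType.
Variable e : rel T.

Definition simple_graph : Prop := symmetric e /\ irreflexive e.

Definition graph_connected : Prop := forall x y : T, connect e x y.

Definition connected_set (S : {set T}) : Prop :=
  forall x y, x \in S -> y \in S ->
    connect [rel u v | [&& e u v, u \in S & v \in S]] x y.

Definition has_Kminor (w : nat) : Prop :=
  exists B : 'I_w -> {set T},
    [/\ forall i, B i != set0,
        forall i, connected_set (B i),
        forall i j, i != j -> [disjoint B i & B j] &
        forall i j, i != j -> exists x y, [/\ x \in B i, y \in B j & e x y]].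

Definition Kminor_free (w : nat) : Prop := ~ has_Kminor w.

(* walks from u: sequences p with u :: p an e-path; length = size p *)
Definition walk (u v : T) (p : seq T) : Prop := path e u p /\ last u p = v.

Definition shortest_walk (u v : T) (p : seq T) : Prop :=
  walk u v p /\ forall q, walk u v q -> size p <= size q.

Definition interval (u v : T) : {set T} :=
  [set x | `[< exists p, shortest_walk u v p /\ x \in u :: p >]].

Definition distinct4 (a b c d : T) : bool :=
  [&& a != b, a != c, a != d, b != c, b != d & c != d].

Definition quad_of (a b c d : T) : {set {set T}} := [set [set a; b]; [set c; d]].

Definition is_quad (U : {set T}) (Q : {set {set T}}) : bool :=
  [exists a in U, exists b in U, exists c in U, exists d in U,
     distinct4 a b c d && (Q == quad_of a b c d)].

Definition is_good_quad (U : {set T}) (Q : {set {set T}}) : bool :=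
  `[< exists a b c d, [&& a \in U, b \in U, c \in U, d \in U,
         distinct4 a b c d, Q == quad_of a b c d &
         interval a b :&: interval c d != set0] >].

Definition q (U : {set T}) : nat := #|[set Q | is_quad U Q]|.
Definition q_good (U : {set T}) : nat := #|[set Q | is_good_quad U Q]|.

Definition epsU (U : {set T}) : rat := (q_good U)%:R / (8 * q U)%:R.

Definition good_pairs (U : {set T}) (a b : T) : nat :=
  #|[set P : {set T} | [exists c in U, exists d in U,
       (P == [set c; d]) && is_good_quad U (quad_of a b c d)]]|.

Definition witnessing_set (U : {set T}) (a : T) (Ua : {set T}) : Prop :=
  [/\ a \in U, Ua \subset U,
      (Num.ceil (4 * epsU U * (#|U| - 1)%N%:R) <= (#|Ua|)%:Z)%R &
      forall b, b \in Ua ->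
        (Num.ceil (4 * epsU U * ('C(#|U| - 2, 2))%N%:R) <= (good_pairs U a b)%:Z)%R].

Definition U_good (U : {set T}) (a : T) : Prop := exists Ua, witnessing_set U a Ua.

End Graphs.

(* Count, for each c, the good partners d of (a, b, c).  Every good pair {c, d}
   is seen from c, so these counts sum to at least good_pairs a b, which is
   >= 4 eps C(n-2, 2) = 2 eps (n-2)(n-3) for b in the witnessing set (n = |U|).
   A count never exceeds n-3, at most n-2 values of c have a nonzero count,
   and a c below the threshold eps (n-3) contributes less than eps (n-3);
   hence at least eps (n-2) values of c reach the threshold. *)

From HB Require Import structures.
From mathcomp Require Import all_boot all_order all_algebra.
From mathcomp Require Import boolp.
From mathcomp Require Import ring lra zify.

Import Order.TTheory GRing.Theory Num.Theory.

Lemma leq_card_bigcup {I T : finType} (P : pred I) (F : I -> {set T}) :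
  #|\bigcup_(i | P i) F i| <= \sum_(i | P i) #|F i|.
Proof.
elim/big_rec2: _ => [|i n S _ leSn]; first by rewrite cards0.
by rewrite (leq_trans (leq_card_setU _ _)) // leq_add2l.
Qed.

Section Threshold.
Local Open Scope ring_scope.

Lemma ceil_le_nat {R : archiRealDomainType} (x : R) (n : nat) :
  (Num.ceil x <= n%:Z) = (x <= n%:R).
Proof. by rewrite ceil_le_int -pmulrn. Qed.

Lemma natr_sum_le_threshold {R : realDomainType} {I : finType} {A : {set I}}
    {f : I -> nat} {M : nat} {x : R} :
  0 <= x -> (forall i, i \in A -> (f i <= M)%N) ->
  (\sum_(i in A) f i)%:R <=
    #|[set i in A | x <= (f i)%:R]|%:R * M%:R + #|[set i in A | (0 < f i)%N]|%:R * x.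
Proof.
move=> x_ge0 f_leM.
have card_natr (P : pred I) :
    #|[set i in A | P i]|%:R = \sum_(i in A) (P i)%:R :> R.
  rewrite -sum1_card natr_sum big_mkcond [RHS]big_mkcond.
  by apply: eq_bigr => i _; rewrite inE; case: (i \in A); case: (P i).
rewrite !card_natr !mulr_suml -big_split natr_sum ler_sum // => i /f_leM fi_leM /=.
have [x_le_fi|fi_lt_x] := lerP x (f i)%:R.
  by rewrite mul1r ler_wpDr ?ler_nat // mulr_ge0.
have [->|_] := posnP (f i); first by rewrite addr_ge0 ?mulr_ge0.
by rewrite mul0r mul1r add0r ltW.
Qed.

End Threshold.

Section Quadruples.
Context {T : finType} (e : rel T).

Lemma distinct4_uniq (a b c d : T) : distinct4 a b c d = uniq [:: a; b; c; d].
Proof. by rewrite /distinct4 /= !inE !negb_or !andbT -!andbA. Qed.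

Lemma cover_quad_of (a b c d : T) :
  cover (quad_of a b c d) = [set x in [:: a; b; c; d]].
Proof. by apply/setP => x; rewrite /cover bigcup_setU !big_set1 !inE !orbA. Qed.

(* is_good_quad only provides some distinct a', b', c', d' in U with the same
   quadruple; distinctness and membership transfer through the common cover. *)
Lemma good_quad_distinct (U : {set T}) (a b c d : T) :
  is_good_quad e U (quad_of a b c d) ->
  [&& a \in U, b \in U, c \in U, d \in U & distinct4 a b c d].
Proof.
case/asboolP=> [a' [b' [c' [d' /and5P[a'U b'U c'U d'U /and3P[dist' /eqP eQ _]]]]]].
have eS := congr1 cover eQ; rewrite !cover_quad_of in eS.
have x_in_U x : x \in [:: a; b; c; d] -> x \in U.
  by rewrite -[x \in _]in_set eS !inE => /or4P[] /eqP->.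
rewrite !x_in_U ?mem_head ?inE ?eqxx ?orbT // distinct4_uniq.
apply/card_uniqP; rewrite -cardsE eS cardsE.
by apply/card_uniqP; rewrite -distinct4_uniq.
Qed.

End Quadruples.

Section GoodPartners.
Context {T : finType} (e : rel T) (U : {set T}) (a b : T).

Definition good_partners (c : T) : {set T} :=
  [set d in U | is_good_quad e U (quad_of a b c d)].

Lemma good_partner_distinct (c d : T) :
  d \in good_partners c -> [&& a \in U, b \in U, c \in U, d \in U & distinct4 a b c d].
Proof. by rewrite inE => /andP[_ /good_quad_distinct]. Qed.

Lemma card_good_partners (c : T) : #|good_partners c| <= #|U| - 3.
Proof.
have [->|[d /good_partner_distinct]] := set_0Vmem (good_partners c); first by rewrite cards0.
case/and5P=> aU bU cU _ /and5P[ab ac _ bc _].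
have sub : good_partners c \subset U :\ a :\ b :\ c.
  apply/subsetP=> d' /good_partner_distinct /and5P[_ _ _ d'U /and5P[_ _ ad' _ /andP[bd' cd']]].
  by rewrite !inE d'U ![d' == _]eq_sym ad' bd' cd'.
apply: leq_trans (subset_leq_card sub) _.
have := cardsD1 a U; have := cardsD1 b (U :\ a); have := cardsD1 c (U :\ a :\ b).
by rewrite !inE aU bU cU (eq_sym c a) (eq_sym c b) (eq_sym b a) ab ac bc; lia.
Qed.

Lemma card_good_partners_support :
  #|[set c in U | 0 < #|good_partners c|]| <= #|U| - 2.
Proof.
set S := [set c in U | _].
have [->|[c]] := set_0Vmem S; first by rewrite cards0.
rewrite inE card_gt0 => /andP[_ /set0Pn[d /good_partner_distinct /and5P[aU bU _ _ /andP[ab _]]]].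
have sub : S \subset U :\ a :\ b.
  apply/subsetP=> c'; rewrite inE card_gt0 => /andP[_ /set0Pn[d']].
  move=> /good_partner_distinct /and5P[_ _ c'U _ /and5P[_ ac' _ bc' _]].
  by rewrite !inE c'U ![c' == _]eq_sym ac' bc'.
apply: leq_trans (subset_leq_card sub) _.
have := cardsD1 a U; have := cardsD1 b (U :\ a).
by rewrite !inE aU bU eq_sym ab; lia.
Qed.

Lemma good_pairs_le_sum : good_pairs e U a b <= \sum_(c in U) #|good_partners c|.
Proof.
pose pairs_at c := [set [set c; d] | d in good_partners c].
apply: (@leq_trans #|\bigcup_(c in U) pairs_at c|).
  apply: subset_leq_card; apply/subsetP=> P; rewrite inE.
  case/existsP=> c /andP[cU /existsP[d /andP[dU /andP[/eqP-> good]]]].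
  by apply/bigcupP; exists c => //; apply/imsetP; exists d; rewrite ?inE ?dU.
apply: leq_trans (leq_card_bigcup _ _) _.
by apply: leq_sum => c _; apply: leq_imset_card.
Qed.

Lemma good_pairs_le_threshold {R : realDomainType} {x : R} : (0 <= x)%R ->
  ((good_pairs e U a b)%:R <=
    #|[set c in U | x <= #|good_partners c|%:R]|%:R * (#|U| - 3)%:R
    + (#|U| - 2)%:R * x)%R.
Proof.
move=> x_ge0; have := good_pairs_le_sum; rewrite -(ler_nat R) => /le_trans; apply.
apply: le_trans (natr_sum_le_threshold x_ge0 (fun c _ => card_good_partners c)) _.
by rewrite lerD2l ler_wpM2r // ler_nat card_good_partners_support.
Qed.

End GoodPartners.

Theorem mainTheorem8 (T : finType) (e : rel T) (w : nat) (U Ua : {set T}) (a : T) :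
  simple_graph e -> graph_connected e -> Kminor_free e w ->
  maxn w 4 <= #|U| ->
  witnessing_set e U a Ua ->
  forall b, b \in Ua ->
    (Num.ceil (epsU e U * (#|U| - 2)%N%:R) <=
      #|[set c in U |
          (Num.ceil (epsU e U * (#|U| - 3)%N%:R) <=
            #|[set d in U | is_good_quad e U (quad_of a b c d)]|%:Z)%R]|%:Z)%R.
Proof.
move=> _ _ _ le_max_U [_ _ _ witness] b /witness.
have U_gt3 : 3 < #|U| by move: le_max_U; rewrite geq_max => /andP[].
rewrite !ceil_le_nat; set eps := epsU e U => pairs_ge.
set n2 : rat := (#|U| - 2)%:R%R; set n3 : rat := (#|U| - 3)%:R%R.
set S := [set c in U | _].
have -> : S = [set c in U | eps * n3 <= #|good_partners e U a b c|%:R]%R.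
  by apply/setP=> c; rewrite !inE ceil_le_nat.
have eps_ge0 : (0 <= eps)%R by rewrite divr_ge0.
have n3_gt0 : (0 < n3)%R by rewrite ltr0n subn_gt0.
have pairs_le := good_pairs_le_threshold e U a b (mulr_ge0 eps_ge0 (ltW n3_gt0)).
rewrite -/n2 -/n3 in pairs_le.
have bin2E : ('C(#|U| - 2, 2) * 2 = (#|U| - 2) * (#|U| - 3))%N.
  by rewrite (bin_ffact _ 2) ffactnS ffactn1 -subnS.
have pairs_geE : (4 * eps * 'C(#|U| - 2, 2)%:R = 2 * (eps * (n2 * n3)))%R.
  by rewrite /n2 /n3 -natrM -bin2E natrM; ring.
by rewrite -(ler_pM2r n3_gt0); lra.
Qed.
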